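(* Let $T$ be a leaf-positive ultrametric tree of radius $1$ with $n$ leaves, let $D$ be its leaf distance matrix, and let $c_T$ be the smallest nonnegative real number $c$ such that $c\,\mathbf{1}_{n\times n}-\frac12D$ is positive semidefinite. Then $c_T=1-\frac1n$ if and only if $T$ is a star-metric.
   Context: An ultrametric tree is a rooted tree with nonnegative edge lengths (zero lengths allowed) such that all leaves have the same distance from the root (the radius). The leaf distance matrix $D$ has $(i,j)$ entry the path-length distance between leaves $i,j$; $\mathbf{1}_{n\times n}$ is the all-ones matrix. The constant $c_T$ exists and satisfies $c_T\le 1-\frac1n$, since the set of such $c$ is closed and contains $1-\frac1n$ but not $0$. The height $H(v)$ of a vertex is the distance from $v$ to its furthest descendant, and $i\vee j$ is the lowest common ancestor of distinct vertices $i,j$. $T$ is leaf-positive if every edge adjacent to a leaf has positive length. $T$ is a star-metric if for any two distinct leaves $i,j$, $H(i\vee j)\in\{0,1\}$. *)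

From HB Require Import structures.
From mathcomp Require Import all_boot all_order all_algebra.
From mathcomp Require Import reals.
Set Implicit Arguments. Unset Strict Implicit. Unset Printing Implicit Defensive.
Import Order.TTheory GRing.Theory Num.Theory.
Local Open Scope ring_scope.

(* A rooted tree with (ordered) children; each child is attached by an edge
   carrying a length.  A leaf is a node without children. *)
Inductive tree (R : Type) : Type := Node of seq (R * tree R).
Arguments Node {R}.

Section Trees.
Variable R : realType.

Definition is_leaf (t : tree R) : bool := let: Node l := t in nilp l.

Fixpoint all_edges (P : R -> tree R -> bool) (t : tree R) : bool :=
  let: Node l := t in
  (fix go (l : seq (R * tree R)) : bool :=
     match l with
     | [::] => true
     | (a, s) :: l' => [&& P a s, all_edges P s & go l']
     end) l.

(* The leaves of t, each given by its root-to-leaf path: the list of edges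
   (child index, edge length) followed from the root.  The enumeration order
   fixes the indexing 0..n-1 of the leaves. *)
Fixpoint leaf_paths (t : tree R) : seq (seq (nat * R)) :=
  let: Node l := t in
  if l is [::] then [:: [::]] else
  (fix go (k : nat) (l : seq (R * tree R)) : seq (seq (nat * R)) :=
     match l with
     | [::] => [::]
     | (a, s) :: l' => map (cons (k, a)) (leaf_paths s) ++ go k.+1 l'
     end) 0%N l.

Definition nleaves (t : tree R) : nat := size (leaf_paths t).

Definition plen (p : seq (nat * R)) : R := \sum_(e <- p) e.2.

Fixpoint pdist (p q : seq (nat * R)) : R :=
  match p, q with
  | (k, _) :: p', (k', _) :: q' => if k == k' then pdist p' q' else plen p + plen q
  | _, _ => plen p + plen q
  end.

Definition leaf_path (t : tree R) (i : nat) : seq (nat * R) :=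
  nth [::] (leaf_paths t) i.

Definition leaf_dist_mx (t : tree R) : 'M[R]_(nleaves t) :=
  \matrix_(i, j) pdist (leaf_path t i) (leaf_path t j).

Definition ultrametric_radius (t : tree R) (r : R) : Prop :=
  all_edges (fun a _ => 0 <= a) t /\ forall p, p \in leaf_paths t -> plen p = r.

Definition leaf_positive (t : tree R) : Prop :=
  all_edges (fun a s => is_leaf s ==> (0 < a)) t.

Fixpoint subtree (t : tree R) (addr : seq nat) : tree R :=
  match addr with
  | [::] => t
  | k :: addr' => let: Node l := t in subtree (nth (0, Node [::]) l k).2 addr'
  end.

Definition height (t : tree R) : R := \big[Num.max/0]_(p <- leaf_paths t) plen p.

Fixpoint common_prefix (a b : seq nat) : seq nat :=
  match a, b with
  | x :: a', y :: b' => if x == y then x :: common_prefix a' b' else [::]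
  | _, _ => [::]
  end.

Definition lca_addr (t : tree R) (i j : nat) : seq nat :=
  common_prefix (map fst (leaf_path t i)) (map fst (leaf_path t j)).

Definition lca_height (t : tree R) (i j : nat) : R := height (subtree t (lca_addr t i j)).

Definition star_metric (t : tree R) : Prop :=
  forall i j : 'I_(nleaves t), i != j ->
    lca_height t i j = 0 \/ lca_height t i j = 1.

Definition psd (n : nat) (M : 'M[R]_n) : Prop :=
  forall x : 'cV[R]_n, 0 <= (x^T *m M *m x) 0 0.

Definition ctest (n : nat) (D : 'M[R]_n) (c : R) : Prop :=
  psd (c *: const_mx 1 - 2^-1 *: D).

Definition is_cT (n : nat) (D : 'M[R]_n) (c : R) : Prop :=
  [/\ 0 <= c, ctest D c & forall c', 0 <= c' -> ctest D c' -> c <= c'].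

End Trees.

From HB Require Import structures.
From mathcomp Require Import all_boot all_order all_algebra.
From mathcomp Require Import reals.
From mathcomp Require Import ring lra zify.
Set Implicit Arguments. Unset Strict Implicit. Unset Printing Implicit Defensive.
Import Order.TTheory GRing.Theory Num.Theory.
Local Open Scope ring_scope.

(* Write D = 2 (J - U), where U i j is the depth of the lowest common ancestor
   of the leaves i and j; then c J - D/2 is PSD iff
   (c - 1) (sum_i x_i)^2 + x^T U x >= 0 for all x.  For a star-metric U is the
   identity, and Cauchy-Schwarz makes 1 - 1/n the least such c.  Otherwise
   U = sum_e w_e 1_{S_e} 1_{S_e}^T over the edges e (of length w_e, with leaf
   set S_e below them) and sum_i x_i = sum_e w_e (sum_{S_e} x), so
   Cauchy-Schwarz with weights w_e gives (sum x)^2 <= L x^T U x, where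
   L = sum_e w_e < sum_e w_e |S_e| = n because some edge of positive length
   lies above two leaves.  Hence c_T <= max(0, 1 - 1/L) < 1 - 1/n. *)

Lemma weighted_cauchy_schwarz (R : realFieldType) (I : finType) (a b : I -> R) :
  (forall i, 0 <= a i) ->
  (\sum_i a i * b i) ^+ 2 <= (\sum_i a i) * (\sum_i a i * b i ^+ 2).
Proof.
move=> a_ge0; set A := \sum_i a i; set X := \sum_i a i * b i.
set Y := \sum_i a i * b i ^+ 2.
have [A0 | A_gt0] := eqVneq A 0.
  have a0 i : a i = 0 by apply: (psumr_eq0P (fun i _ => a_ge0 i) A0).
  rewrite /X big1 ?expr0n ?A0 ?mul0r // => i _; by rewrite a0 mul0r.
have {}A_gt0 : 0 < A by rewrite lt0r A_gt0 sumr_ge0.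
have dev_ge0 : 0 <= \sum_i a i * (A * b i - X) ^+ 2.
  by apply: sumr_ge0 => i _; rewrite mulr_ge0 ?sqr_ge0.
have dev_eq : \sum_i a i * (A * b i - X) ^+ 2 = A * (A * Y - X ^+ 2).
  rewrite (eq_bigr (fun i => A ^+ 2 * (a i * b i ^+ 2) - (2 * A * X) * (a i * b i)
    + X ^+ 2 * a i)); last by move=> i _; ring.
  rewrite big_split /= sumrB -!mulr_sumr -/Y -/X -/A; ring.
by rewrite dev_eq pmulr_rge0 // subr_ge0 in dev_ge0.
Qed.

Section ClassSums.
Context {R : comPzRingType} (I : finType) (r : rel I).
Hypotheses (r_sym : symmetric r) (r_trans : transitive r).

Definition class_size i : R := \sum_(j | r i j) 1.

Lemma class_eq i j : r i j -> r i =1 r j.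
Proof. by move=> rij k; apply/idP/idP => [|/(r_trans rij)//]; apply: r_trans; rewrite r_sym. Qed.

Lemma class_size_eq i j : r i j -> class_size i = class_size j.
Proof. by move=> rij; rewrite /class_size (eq_bigl _ _ (class_eq rij)). Qed.

Lemma sum_mul_class_sum (F G : I -> R) : (forall i j, r i j -> F i = F j) ->
  \sum_i F i * (\sum_(j | r i j) G j) = \sum_i G i * F i * class_size i.
Proof.
move=> F_class; under eq_bigr do rewrite mulr_sumr big_mkcond.
rewrite exchange_big /=; apply: eq_bigr => j _.
rewrite /class_size mulr_sumr [RHS]big_mkcond; apply: eq_bigr => i _.
by rewrite r_sym; case: ifP => // rji; rewrite (F_class _ _ rji) mulr1 mulrC.
Qed.

End ClassSums.

(* The edge at depth m above leaf i is seen from every leaf k with r m i k, so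
   dividing its length w m i by the size of that class counts each edge once. *)
Section ClassWeights.
Variables (R : realFieldType) (n B : nat) (w : 'I_B -> 'I_n -> R) (r : 'I_B -> rel 'I_n).
Hypotheses (r_sym : forall m, symmetric (r m)) (r_trans : forall m, transitive (r m)).
Hypotheses (w_ge0 : forall m i, 0 <= w m i) (w_class : forall m i j, r m i j -> w m i = w m j).
Hypotheses (w_supp : forall m i, 0 < w m i -> r m i i) (w_sum1 : forall i, \sum_m w m i = 1).

Definition shared_weight i j := \sum_m (if r m i j then w m i else 0).

Let N m i : R := class_size (r m) i.
Definition class_weight (p : 'I_B * 'I_n) := w p.1 p.2 / N p.1 p.2.
Let S (x : 'I_n -> R) m i := \sum_(j | r m i j) x j.

Lemma class_size_ge1 m i : r m i i -> 1 <= N m i.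
Proof. by move=> rii; rewrite /N /class_size (bigD1 i) //= lerDl sumr_ge0. Qed.

Lemma weight0_or_class_size_ge1 m i : w m i = 0 \/ 1 <= N m i.
Proof.
have [/w_supp/class_size_ge1 | w_le0] := ltrP 0 (w m i); first by right.
by left; apply: le_anti; rewrite w_le0 w_ge0.
Qed.

Lemma class_weightK m i : class_weight (m, i) * N m i = w m i.
Proof.
have [w0 | N_ge1] := weight0_or_class_size_ge1 m i; first by rewrite /class_weight /= w0 !mul0r.
by rewrite divfK // gt_eqF // (lt_le_trans ltr01).
Qed.

Lemma class_weight_ge0 p : 0 <= class_weight p.
Proof. by rewrite divr_ge0 // sumr_ge0. Qed.

Lemma class_weight_le p : class_weight p <= w p.1 p.2.
Proof.
have [w0 | N_ge1] := weight0_or_class_size_ge1 p.1 p.2; first by rewrite /class_weight w0 mul0r.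
by rewrite /class_weight ler_pdivrMr ?ler_peMr // (lt_le_trans ltr01).
Qed.

Lemma class_weight_class m i j : r m i j -> class_weight (m, i) = class_weight (m, j).
Proof.
move=> rij; rewrite /class_weight /= (w_class rij) /N.
by rewrite (class_size_eq (@r_sym m) (@r_trans m) rij).
Qed.

Lemma sum_eq_class_weighted (x : 'I_n -> R) :
  \sum_i x i = \sum_p class_weight p * S x p.1 p.2.
Proof.
rewrite -(pair_bigA _ (fun m i => class_weight (m, i) * S x m i)) /=.
transitivity (\sum_m \sum_i x i * w m i).
  by rewrite exchange_big /=; apply: eq_bigr => i _; rewrite -mulr_sumr w_sum1 mulr1.
apply: eq_bigr => m _.
rewrite (sum_mul_class_sum (@r_sym m) (F := fun i => class_weight (m, i)));
  last exact: class_weight_class.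
by apply: eq_bigr => i _; rewrite -mulrA class_weightK.
Qed.

Lemma shared_form_eq (x : 'I_n -> R) :
  \sum_i \sum_j x i * x j * shared_weight i j = \sum_p class_weight p * S x p.1 p.2 ^+ 2.
Proof.
rewrite -(pair_bigA _ (fun m i => class_weight (m, i) * S x m i ^+ 2)) /=.
transitivity (\sum_m \sum_i x i * w m i * S x m i).
  rewrite [RHS]exchange_big /=; apply: eq_bigr => i _.
  under eq_bigr do rewrite /shared_weight mulr_sumr.
  rewrite exchange_big /=; apply: eq_bigr => m _.
  rewrite /S mulr_sumr [RHS]big_mkcond /=; apply: eq_bigr => j _.
  by case: ifP => _; [ring | rewrite mulr0].
apply: eq_bigr => m _; under [RHS]eq_bigr do rewrite expr2 mulrA.
rewrite (sum_mul_class_sum (@r_sym m) (F := fun i => class_weight (m, i) * S x m i)).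
  by apply: eq_bigr => i _; rewrite -(class_weightK m i) /N; ring.
move=> i j rij; rewrite (class_weight_class rij) /S.
by rewrite (eq_bigl _ _ (class_eq (@r_sym m) (@r_trans m) rij)).
Qed.

Lemma sum_sqr_le_shared_form (x : 'I_n -> R) :
  (\sum_i x i) ^+ 2 <=
    (\sum_p class_weight p) * \sum_i \sum_j x i * x j * shared_weight i j.
Proof.
by rewrite sum_eq_class_weighted shared_form_eq weighted_cauchy_schwarz // => p;
  apply: class_weight_ge0.
Qed.

Lemma total_class_weight_gt0 m i : 0 < w m i -> 0 < \sum_p class_weight p.
Proof.
move=> w_gt0; rewrite (bigD1 (m, i)) //= ltr_pwDl ?sumr_ge0 // => [|p _].
  by rewrite divr_gt0 // (lt_le_trans ltr01) // class_size_ge1 // w_supp.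
exact: class_weight_ge0.
Qed.

Lemma total_class_weight_lt m i j : i != j -> r m i j -> 0 < w m i ->
  \sum_p class_weight p < n%:R.
Proof.
move=> ij rij w_gt0.
have -> : n%:R = \sum_p w p.1 p.2.
  rewrite -(pair_bigA _ w) exchange_big /= -[n in n%:R]card_ord -sumr_const.
  by apply: eq_bigr => k _; rewrite w_sum1.
rewrite (bigD1 (m, i)) // [X in _ < X](bigD1 (m, i)) //=.
rewrite ltr_leD ?ler_sum // => [|p _]; last exact: class_weight_le.
have N_ge2 : 2 <= N m i.
  rewrite /N /class_size (bigD1 i) ?(w_supp w_gt0) // (bigD1 j) /=; last by rewrite rij eq_sym ij.
  by rewrite addrA lerDl sumr_ge0.
rewrite /class_weight ltr_pdivrMr ?(lt_le_trans _ N_ge2) // ltr_pMr //.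
by apply: lt_le_trans N_ge2; rewrite ltr1n.
Qed.

End ClassWeights.

Section CTest.
Variables (R : realType) (n : nat) (D : 'M[R]_n) (U : 'I_n -> 'I_n -> R).
Hypothesis D_U : forall i j, D i j = 2 - 2 * U i j.

Lemma ctestE c : ctest D c <-> forall x : 'cV[R]_n,
  0 <= (c - 1) * (\sum_i x i 0) ^+ 2 + \sum_i \sum_j x i 0 * x j 0 * U i j.
Proof.
suff qformE (x : 'cV[R]_n) : (x^T *m (c *: const_mx 1 - 2^-1 *: D) *m x) 0 0 =
    (c - 1) * (\sum_i x i 0) ^+ 2 + \sum_i \sum_j x i 0 * x j 0 * U i j.
  by split=> H x; [rewrite -qformE | rewrite qformE].
rewrite mxE; under eq_bigr => j _ do rewrite mxE big_distrl /=.
rewrite exchange_big /= expr2 mulr_suml mulr_sumr -big_split /=; apply: eq_bigr => i _.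
rewrite mulr_sumr !mulr_sumr -big_split /=; apply: eq_bigr => j _.
by rewrite !mxE D_U /=; field.
Qed.

Lemma ctest_sum_sqr_bound L : 0 < L ->
  (forall x : 'I_n -> R, (\sum_i x i) ^+ 2 <= L * \sum_i \sum_j x i * x j * U i j) ->
  ctest D (1 - L^-1).
Proof.
move=> L_gt0 bound; apply/ctestE => x; have := bound (fun i => x i 0).
rewrite addrAC subrr add0r mulNr addrC subr_ge0.
by rewrite -(ler_pM2l L_gt0) mulrA mulfV ?gt_eqF // mul1r.
Qed.

End CTest.

Lemma ctest_le (R : realType) n (D : 'M[R]_n) c c' : c <= c' -> ctest D c -> ctest D c'.
Proof.
have D_U i j : D i j = 2 - 2 * (1 - D i j / 2) by field.
move=> le_cc' /(ctestE D_U) ctest_c; apply/(ctestE D_U) => x.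
by apply: le_trans (ctest_c x) _; rewrite lerD2r ler_wpM2r ?sqr_ge0 ?lerD2r.
Qed.

Lemma ctest_delta (R : realType) n (D : 'M[R]_n) c : (0 < n)%N ->
  (forall i j, D i j = 2 - 2 * (i == j)%:R) -> ctest D c <-> 1 - n%:R^-1 <= c.
Proof.
move=> n_gt0 D_delta; have n_gt0R : 0 < n%:R :> R by rewrite ltr0n.
have formE (x : 'I_n -> R) : \sum_i \sum_j x i * x j * (i == j)%:R = \sum_i x i ^+ 2.
  apply: eq_bigr => i _; rewrite (bigD1 i) //= eqxx mulr1 big1 ?addr0 //.
  by move=> j /negbTE ji; rewrite eq_sym ji mulr0.
split=> [/(ctestE D_delta)/(_ (const_mx 1)) | le_c].
  rewrite (formE (fun i => const_mx 1 i 0)).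
  under eq_bigr do rewrite mxE; under [X in _ + X]eq_bigr do rewrite mxE expr1n.
  rewrite sumr_const card_ord.
  have -> : (c - 1) * n%:R ^+ 2 + n%:R = n%:R * ((c - 1) * n%:R + 1) by ring.
  rewrite pmulr_rge0 // => ge0; rewrite -subr_ge0.
  have -> : c - (1 - n%:R^-1) = n%:R^-1 * ((c - 1) * n%:R + 1) by field; rewrite gt_eqF.
  by rewrite mulr_ge0 // invr_ge0 ler0n.
apply: (ctest_le le_c); apply: (ctest_sum_sqr_bound D_delta n_gt0R) => x /=.
rewrite formE; have /= := weighted_cauchy_schwarz x (fun _ => ler01).
rewrite sumr_const card_ord; under eq_bigr do rewrite mul1r.
by under [X in _ * X]eq_bigr do rewrite mul1r.
Qed.

Section Paths.
Variable R : realType.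
Implicit Types (p q : seq (nat * R)) (e : nat * R).

Lemma plen_nil : plen [::] = 0 :> R.
Proof. by rewrite /plen big_nil. Qed.

Lemma plen_cons e p : plen (e :: p) = e.2 + plen p.
Proof. by rewrite /plen big_cons. Qed.

Lemma plen_cat p q : plen (p ++ q) = plen p + plen q.
Proof. by rewrite /plen big_cat. Qed.

Lemma plen_ge0 p : all (fun e => 0 <= e.2) p -> 0 <= plen p.
Proof. by move=> p_ge0; rewrite /plen big_seq sumr_ge0 // => e /(allP p_ge0). Qed.

Lemma plen_sum_nth p B : (size p <= B)%N -> plen p = \sum_(m < B) (nth (0%N, 0) p m).2.
Proof.
elim: p B => [|e p IH] B p_le; first by rewrite plen_nil big1 // => m _; rewrite nth_nil.
by case: B p_le => // B p_le; rewrite plen_cons big_ord_recl (IH B p_le).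
Qed.

Fixpoint common_len p q : R :=
  match p, q with
  | e :: p', f :: q' => if e.1 == f.1 then e.2 + common_len p' q' else 0
  | _, _ => 0
  end.

Lemma common_len_id p : common_len p p = plen p.
Proof. by elim: p => [|e p IH] /=; rewrite ?plen_nil ?plen_cons ?eqxx ?IH. Qed.

Lemma common_len_ge0 p q : all (fun e => 0 <= e.2) p -> 0 <= common_len p q.
Proof.
elim: p q => [|e p IH] [|f q] //= /andP [e_ge0 p_ge0].
by case: ifP => // _; rewrite addr_ge0 ?IH.
Qed.

Lemma common_prefix_takel (a b : seq nat) : common_prefix a b = take (size (common_prefix a b)) a.
Proof. by elim: a b => [|x a IH] [|y b] //=; case: eqP => //= _; rewrite -IH. Qed.

Lemma common_prefix_taker (a b : seq nat) : common_prefix a b = take (size (common_prefix a b)) b.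
Proof. by elim: a b => [|x a IH] [|y b] //=; case: eqP => //= ->; rewrite -IH. Qed.

Lemma common_len_take p q :
  common_len p q = plen (take (size (common_prefix (map fst p) (map fst q))) p).
Proof.
elim: p q => [|e p IH] [|f q] /=; rewrite ?take0 ?plen_nil //.
by case: eqP => _ /=; rewrite ?take0 ?plen_nil ?plen_cons -?IH.
Qed.

Definition same_prefix (m : nat) p q : bool :=
  (m < size p)%N && (map fst (take m.+1 p) == map fst (take m.+1 q)).

Lemma same_prefix_sym m : symmetric (same_prefix m).
Proof.
suff imp p q : same_prefix m p q -> same_prefix m q p by move=> p q; apply/idP/idP; apply: imp.
rewrite /same_prefix => /andP [m_lt /eqP pq]; rewrite pq eqxx andbT.
have := congr1 size pq; rewrite !size_map !size_take_min => size_eq.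
by apply/minn_idPl; rewrite -size_eq; apply/minn_idPl.
Qed.

Lemma same_prefix_trans m : transitive (same_prefix m).
Proof.
by move=> q p r; rewrite /same_prefix => /andP [m_lt /eqP ->] /andP [_ /eqP ->]; rewrite m_lt eqxx.
Qed.

Lemma common_len_sum p q B : (size p <= B)%N ->
  common_len p q = \sum_(m < B) (if same_prefix m p q then (nth (0%N, 0) p m).2 else 0).
Proof.
rewrite /same_prefix; elim: p q B => [|e p IH] q B p_le; first by rewrite big1.
case: B p_le => // B p_le; rewrite big_ord_recl /=.
case: q => [|f q] /=; first by rewrite big1 ?addr0 // => m _; rewrite andbF.
rewrite (IH q B p_le) !take0 /= eqseq_cons andbT.
have [ef | nef] := eqVneq e.1 f.1.
  by congr (_ + _); apply: eq_bigr => m _; rewrite eqseq_cons ef eqxx.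
by rewrite add0r big1 // => m _; rewrite eqseq_cons (negbTE nef) andbF.
Qed.

End Paths.

Section LeafPaths.
Variable R : realType.
Implicit Types (t : tree R) (l : seq (R * tree R)) (p q : seq (nat * R)).

Local Notation child l k := (nth (0, Node [::]) l k).

Fixpoint tree_nth_ind (P : tree R -> Prop)
    (IH : forall l, (forall k, (k < size l)%N -> P (child l k).2) -> P (Node l))
    t : P t :=
  let: Node l := t in IH l ((fix go l : forall k, (k < size l)%N -> P (child l k).2 :=
     match l return forall k, (k < size l)%N -> P (child l k).2 with
     | [::] => fun k k_lt => ltac:(by rewrite ltn0 in k_lt)
     | (a, s) :: l' => fun k =>
       match k return (k < size ((a, s) :: l'))%N -> P (child ((a, s) :: l') k).2 with
       | 0 => fun _ => tree_nth_ind IH s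
       | k'.+1 => fun k_lt => go l' k' k_lt
       end
     end) l).

Fixpoint child_leaf_paths (k : nat) l : seq (seq (nat * R)) :=
  if l is (a, s) :: l' then map (cons (k, a)) (leaf_paths s) ++ child_leaf_paths k.+1 l'
  else [::].

Lemma leaf_paths_Node l :
  leaf_paths (Node l) = if l is [::] then [:: [::]] else child_leaf_paths 0 l.
Proof. by case: l. Qed.

Lemma mem_child_leaf_paths k0 l p : p \in child_leaf_paths k0 l <->
  exists k p', [/\ (k < size l)%N, p = (k0 + k, (child l k).1)%N :: p'
                 & p' \in leaf_paths (child l k).2].
Proof.
elim: l k0 p => [|[a s] l IH] k0 p /=; first by split=> // -[k [p' []]].
rewrite mem_cat; split.
  case/orP=> [/mapP [p' p'_in ->]|/IH [k [p' [k_lt -> p'_in]]]].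
    by exists 0%N, p'; rewrite addn0.
  by exists k.+1, p'; rewrite addSnnS.
case=> [[|k] [p' [k_lt -> p'_in]]]; first by rewrite addn0 map_f.
by apply/orP; right; apply/IH; exists k, p'; rewrite addSnnS.
Qed.

Lemma mem_leaf_paths_Node l p : p \in leaf_paths (Node l) <->
  (l = [::] /\ p = [::]) \/
  exists k p', [/\ (k < size l)%N, p = (k, (child l k).1) :: p'
                 & p' \in leaf_paths (child l k).2].
Proof.
rewrite leaf_paths_Node; case: l => [|e l].
  rewrite inE; split=> [/eqP ->|[[_ ->]|[k [p' []]]]] //; by left.
by rewrite mem_child_leaf_paths; split=> [|[[]//|]] //; right.
Qed.

Lemma nil_leaf_path l : [::] \in leaf_paths (Node l) -> l = [::].
Proof. by case/mem_leaf_paths_Node=> [[]//|[k [p' []]]]. Qed.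

Lemma leaf_paths_uniq t : uniq (leaf_paths t).
Proof.
elim/tree_nth_ind: t => l IH; rewrite leaf_paths_Node; case: l IH => [//|e l] IH.
move: (e :: l) IH 0%N => {e}l; elim: l => [//|[a s] l IHl] IH k0 /=.
rewrite cat_uniq (IHl (fun k => IH k.+1)) map_inj_uniq ?(IH 0%N) //=; last by move=> p q [].
rewrite andbT; apply/hasPn => q /mem_child_leaf_paths [k [p' [_ -> _]]].
by apply/mapP => -[r _ [k0_eq _]]; move: (leq_addr k k0.+1); rewrite k0_eq ltnn.
Qed.

Lemma nleaves_gt0 t : (0 < nleaves t)%N.
Proof.
elim/tree_nth_ind: t => l IH; rewrite /nleaves leaf_paths_Node.
case: l IH => [//|[a s] l] IH /=.
by rewrite size_cat size_map (leq_trans (IH 0%N isT)) // leq_addr.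
Qed.

Lemma all_edges_child P l k : all_edges P (Node l) -> (k < size l)%N ->
  P (child l k).1 (child l k).2 && all_edges P (child l k).2.
Proof.
elim: l k => [//|[a s] l IH] [|k] /= /and3P [Pas s_edges l_edges] k_lt; first by rewrite Pas.
exact: IH.
Qed.

Lemma leaf_path_ge0 t p : all_edges (fun a _ => 0 <= a) t -> p \in leaf_paths t ->
  all (fun e => 0 <= e.2) p.
Proof.
elim/tree_nth_ind: t p => l IH p t_ge0.
case/mem_leaf_paths_Node=> [[_ ->]//|[k [p' [k_lt -> p'_in]]]] /=.
by case/andP: (all_edges_child t_ge0 k_lt) => -> /IH; apply.
Qed.

Lemma leaf_paths_take_eq t p q m : p \in leaf_paths t -> q \in leaf_paths t ->
  map fst (take m p) = map fst (take m q) -> take m p = take m q.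
Proof.
elim/tree_nth_ind: t p q m => l IH p q m.
case/mem_leaf_paths_Node=> [[-> ->]|[k [p' [k_lt -> p'_in]]]].
  by case/mem_leaf_paths_Node=> [[_ ->]//|[k [q' []]]].
case/mem_leaf_paths_Node=> [[l0 _]|[k' [q' [_ -> q'_in]]]]; first by rewrite l0 in k_lt.
case: m => [//|m] /= [kk']; subst k'.
by move=> /(IH k k_lt _ _ _ p'_in q'_in) ->.
Qed.

Lemma pdist_leaf_paths t p q : p \in leaf_paths t -> q \in leaf_paths t ->
  pdist p q = plen p + plen q - 2 * common_len p q.
Proof.
elim/tree_nth_ind: t p q => l IH p q.
case/mem_leaf_paths_Node=> [[-> ->] _|[k [p' [k_lt -> p'_in]]]]; first by rewrite mulr0 subr0.
case/mem_leaf_paths_Node=> [[l0 _]|[k' [q' [_ -> q'_in]]]]; first by rewrite l0 in k_lt.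
rewrite /= !plen_cons; case: eqP => [kk'|_]; last by rewrite mulr0 subr0.
subst k'.
by rewrite (IH k k_lt p' q' p'_in q'_in) /=; ring.
Qed.

Lemma drop_leaf_path t p m : p \in leaf_paths t ->
  drop m p \in leaf_paths (subtree t (map fst (take m p))).
Proof.
elim/tree_nth_ind: t p m => l IH p m.
case/mem_leaf_paths_Node=> [[-> ->]//|[k [p' [k_lt -> p'_in]]]].
case: m => [|m]; last exact: IH.
by rewrite drop0; apply/mem_leaf_paths_Node; right; exists k, p'.
Qed.

Lemma cat_leaf_path t p m r : p \in leaf_paths t ->
  r \in leaf_paths (subtree t (map fst (take m p))) -> take m p ++ r \in leaf_paths t.
Proof.
elim/tree_nth_ind: t p m r => l IH p m r.
case/mem_leaf_paths_Node=> [[-> ->]|[k [p' [k_lt -> p'_in]]]]; first by rewrite inE => /eqP ->.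
case: m => [|m] /= r_in; first exact: r_in.
by apply/mem_leaf_paths_Node; right; exists k, (take m p' ++ r); split=> //; apply: IH.
Qed.

Lemma leaf_positive_plen_drop t p m : leaf_positive t -> all_edges (fun a _ => 0 <= a) t ->
  p \in leaf_paths t -> (m < size p)%N -> 0 < plen (drop m p).
Proof.
elim/tree_nth_ind: t p m => l IH p m t_pos t_ge0.
case/mem_leaf_paths_Node=> [[_ ->]//|[k [p' [k_lt -> p'_in]]]].
have /andP [leaf_pos s_pos] := all_edges_child t_pos k_lt.
have /andP [a_ge0 s_ge0] := all_edges_child t_ge0 k_lt.
case: m => [_|m m_lt] /=; last exact: (IH k k_lt p' m s_pos s_ge0 p'_in m_lt).
rewrite plen_cons; case: p' p'_in => [|e p'] p'_in.
  move: leaf_pos p'_in; case: (child l k).2 => l' /=.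
  by move=> /implyP pos /nil_leaf_path l'0; rewrite plen_nil addr0 pos ?l'0.
by rewrite ltr_wpDl // (IH k k_lt (e :: p') 0%N).
Qed.

End LeafPaths.

Lemma bigmax_seq_const (R : realDomainType) (I : eqType) (s : seq I) (F : I -> R) h :
  s != [::] -> 0 <= h -> {in s, forall x, F x = h} -> \big[Num.max/0]_(x <- s) F x = h.
Proof.
move=> + h_ge0; elim: s => [//|x [|y s] IH] _ F_h; rewrite big_cons F_h ?mem_head //.
  by rewrite big_nil max_l.
by rewrite IH ?maxxx // => z z_in; apply: F_h; rewrite inE z_in orbT.
Qed.

Section UltrametricTree.
Variables (R : realType) (t : tree R).
Hypothesis t_ultra : ultrametric_radius t 1.

Local Notation n := (nleaves t).
Local Notation lpath := (leaf_path t).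

Let t_ge0 : all_edges (fun a _ => 0 <= a) t := proj1 t_ultra.
Let plen_leaf : forall p, p \in leaf_paths t -> plen p = 1 := proj2 t_ultra.

Lemma leaf_path_in (i : 'I_n) : lpath i \in leaf_paths t.
Proof. exact: mem_nth. Qed.

Lemma leaf_dist_mxE (i j : 'I_n) :
  leaf_dist_mx t i j = 2 - 2 * common_len (lpath i) (lpath j).
Proof.
rewrite mxE (pdist_leaf_paths (leaf_path_in i) (leaf_path_in j)).
by rewrite !plen_leaf ?leaf_path_in.
Qed.

Lemma lca_height_leaf (i j : 'I_n) : lca_height t i j = 1 - common_len (lpath i) (lpath j).
Proof.
have p_in := leaf_path_in i; set p := lpath i in p_in *; set q := lpath j.
set m := size (common_prefix (map fst p) (map fst q)).
have lca_p : lca_addr t i j = map fst (take m p) by rewrite /lca_addr map_take -common_prefix_takel.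
have common_p : common_len p q = plen (take m p) := common_len_take p q.
have split_p : plen (take m p) + plen (drop m p) = 1 by rewrite -plen_cat cat_take_drop plen_leaf.
rewrite /lca_height lca_p; apply: bigmax_seq_const.
- by apply/eqP => no_leaf; have := drop_leaf_path m p_in; rewrite no_leaf.
- move: (leaf_path_ge0 t_ge0 p_in); rewrite -{1}(cat_take_drop m p) all_cat.
  by case/andP=> _ /plen_ge0; rewrite common_p; lra.
- by move=> r r_in; have := plen_leaf (cat_leaf_path p_in r_in); rewrite plen_cat common_p; lra.
Qed.

Lemma common_len_lt1 (i j : 'I_n) : leaf_positive t -> i != j -> common_len (lpath i) (lpath j) < 1.
Proof.
move=> t_pos ij; have p_in := leaf_path_in i; have q_in := leaf_path_in j.
set p := lpath i in p_in *; set q := lpath j in q_in *.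
set m := size (common_prefix (map fst p) (map fst q)).
have split_p : plen (take m p) + plen (drop m p) = 1 by rewrite -plen_cat cat_take_drop plen_leaf.
rewrite common_len_take -/m.
have [m_lt | p_le] := ltnP m (size p).
  by have := leaf_positive_plen_drop t_pos t_ge0 p_in m_lt; lra.
have prefix_eq : map fst (take m p) = map fst (take m q).
  by rewrite !map_take -common_prefix_takel -common_prefix_taker.
have := drop_leaf_path m q_in; rewrite -prefix_eq.
have := drop_leaf_path m p_in; rewrite (drop_oversize p_le).
case: (subtree t _) => l /nil_leaf_path -> /mem_leaf_paths_Node [[_ q_drop]|[k [? []//]]].
have pq : p = q.
  rewrite -(take_oversize p_le) (leaf_paths_take_eq p_in q_in prefix_eq).
  by rewrite -[RHS](cat_take_drop m) q_drop cats0.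
case/negP: ij; apply/eqP/val_inj/eqP.
by rewrite -(nth_uniq [::] _ _ (leaf_paths_uniq t)) ?ltn_ord //; apply/eqP.
Qed.

Lemma common_len_leaf_ge0 (i j : 'I_n) : 0 <= common_len (lpath i) (lpath j).
Proof. exact: common_len_ge0 (leaf_path_ge0 t_ge0 (leaf_path_in i)). Qed.

Lemma common_len_form_bound (i j : 'I_n) : i != j -> 0 < common_len (lpath i) (lpath j) ->
  exists2 L, 0 < L < n%:R & forall x : 'I_n -> R,
    (\sum_k x k) ^+ 2 <= L * \sum_k \sum_l x k * x l * common_len (lpath k) (lpath l).
Proof.
move=> ij common_gt0; pose B := \big[maxn/0%N]_(k < n) size (lpath k).
have size_le (k : 'I_n) : (size (lpath k) <= B)%N.
  by rewrite /B; apply: (@leq_bigmax _ (fun k : 'I_n => size (lpath k))).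
pose w (m : 'I_B) (k : 'I_n) := (nth (0%N, 0) (lpath k) m).2.
pose r (m : 'I_B) : rel 'I_n := fun k l => same_prefix m (lpath k) (lpath l).
have r_sym m : symmetric (r m) by move=> k l; apply: same_prefix_sym.
have r_trans m : transitive (r m) by move=> k l o; apply: same_prefix_trans.
have w_ge0 m k : 0 <= w m k.
  have [m_lt | m_ge] := ltnP m (size (lpath k)); last by rewrite /w nth_default.
  exact: (all_nthP _ (leaf_path_ge0 t_ge0 (leaf_path_in k))).
have w_class m k l : r m k l -> w m k = w m l.
  case/andP=> m_lt /eqP/(leaf_paths_take_eq (leaf_path_in k) (leaf_path_in l)) take_eq.
  by rewrite /w -(nth_take _ (ltnSn m)) take_eq nth_take.
have w_supp m k : 0 < w m k -> r m k k.
  rewrite /r /same_prefix eqxx andbT; apply: contraTT; rewrite -leqNgt => m_ge.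
  by rewrite /w nth_default // ltxx.
have w_sum1 k : \sum_m w m k = 1 by rewrite -(plen_sum_nth (size_le k)) plen_leaf ?leaf_path_in.
have common_shared (k l : 'I_n) : common_len (lpath k) (lpath l) = shared_weight w r k l.
  exact: common_len_sum (size_le k).
have [m /andP [rm w_gt0]] : exists m, r m i j && (0 < w m i).
  apply/existsP; apply: contraTT common_gt0 => /existsPn no_shared.
  rewrite -leNgt common_shared sumr_le0 // => m _; case: ifP => // rm.
  by move: (no_shared m); rewrite rm -leNgt.
exists (\sum_p class_weight w r p).
  rewrite (total_class_weight_gt0 w_ge0 w_supp w_gt0).
  exact: (total_class_weight_lt w_ge0 w_supp w_sum1 ij rm w_gt0).
move=> x; under [X in _ * X]eq_bigr do under eq_bigr do rewrite common_shared.
exact: sum_sqr_le_shared_form.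
Qed.

Lemma ctest_lt_star (i j : 'I_n) : i != j -> 0 < common_len (lpath i) (lpath j) ->
  exists c, [/\ 0 <= c, c < 1 - n%:R^-1 & ctest (leaf_dist_mx t) c].
Proof.
move=> ij common_gt0.
have [L /andP [L_gt0 L_lt] bound] := common_len_form_bound ij common_gt0.
have n_gt1 : (1 < n)%N by move: ij (ltn_ord i) (ltn_ord j); rewrite -(inj_eq val_inj) /=; lia.
exists (Num.max 0 (1 - L^-1)); split; first by rewrite le_max lexx.
  have inv_lt : n%:R^-1 < L^-1 by rewrite ltf_pV2 ?posrE ?ltr0n ?nleaves_gt0.
  have inv_lt1 : n%:R^-1 < 1 :> R by rewrite invf_lt1 ?ltr1n ?ltr0n ?nleaves_gt0.
  by rewrite gt_max; apply/andP; split; lra.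
apply: ctest_le (ctest_sum_sqr_bound leaf_dist_mxE L_gt0 bound).
by rewrite le_max lexx orbT.
Qed.

Lemma star_leaf_dist_mx : leaf_positive t -> star_metric t ->
  forall i j : 'I_n, leaf_dist_mx t i j = 2 - 2 * (i == j)%:R.
Proof.
move=> t_pos star i j; rewrite leaf_dist_mxE; congr (2 - 2 * _).
have [<-|ij] := eqVneq i j; first by rewrite common_len_id plen_leaf ?leaf_path_in.
have := common_len_lt1 t_pos ij; have := common_len_leaf_ge0 i j.
by case: (star i j ij); rewrite lca_height_leaf mulr0n; lra.
Qed.

End UltrametricTree.

Theorem proposition2p3 (R : realType) (t : tree R) (c : R) :
  ultrametric_radius t 1 -> leaf_positive t ->
  is_cT (leaf_dist_mx t) c ->
  (c = 1 - (nleaves t)%:R^-1 <-> star_metric t).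
Proof.
move=> t_ultra t_pos [c_ge0 ctest_c c_min]; have n_gt0 := nleaves_gt0 t.
split=> [c_eq i j ij | star].
  right; rewrite lca_height_leaf //.
  have [common_gt0|] := ltrP 0 (common_len (leaf_path t i) (leaf_path t j)); last first.
    by have := common_len_leaf_ge0 t_ultra i j; lra.
  have [c' [c'_ge0 c'_lt ctest_c']] := ctest_lt_star t_ultra ij common_gt0.
  by move: (c_min c' c'_ge0 ctest_c'); rewrite c_eq leNgt c'_lt.
have D_delta := star_leaf_dist_mx t_ultra t_pos star.
apply: le_anti; rewrite (ctest_delta c n_gt0 D_delta).1 // andbT.
apply: c_min; last exact/(ctest_delta _ n_gt0 D_delta).
by rewrite subr_ge0 invf_le1 ?ler1n ?ltr0n.
Qed.
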